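(* Let $G=(V,E)$ be a finite, simple, connected reflective graph and $x\sim y$. Then $V_x^y$ is convex, and the subgraph induced on $V_x^y$ is reflective.
   Context: $d$ is the combinatorial distance. For adjacent $x\sim y$ let $V_x^y=\{v: d(v,x)<d(v,y)\}$, $V^{xy}=\{v:d(v,x)=d(v,y)\}$. A reflection from $x$ to $y$ is a graph automorphism $\phi$ with $\phi\circ\phi=\mathrm{id}$, $\phi(x)=y$, such that the edges between $V_x^y$ and $V_y^x$ are exactly $\{\{x',\phi(x')\}:x'\in V_x^y\}$ and $\phi$ fixes $V^{xy}$ pointwise. A graph is reflective if every edge admits a reflection. A set $W\subseteq V$ is convex if every shortest path in $G$ whose first and last vertices lie in $W$ has all its vertices in $W$. *)

From mathcomp Require Import all_boot.
Set Implicit Arguments. Unset Strict Implicit. Unset Printing Implicit Defensive.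

Section Graphs.
Variable T : finType.
Variable e : rel T.

Definition simple_graph : Prop := symmetric e /\ irreflexive e.
Definition connected_graph : Prop := forall u v : T, connect e u v.

Definition walkn (n : nat) (u v : T) : bool :=
  [exists p : n.-tuple T, path e u p && (last u p == v)].

(* combinatorial distance: least n with a walk of length n from u to v
   (for unreachable v it equals #|T|, irrelevant for connected graphs) *)
Definition dist (u v : T) : nat := find (fun n => walkn n u v) (iota 0 #|T|).

Definition Vside (x y : T) : {set T} := [set v | dist v x < dist v y].
Definition Vmid (x y : T) : {set T} := [set v | dist v x == dist v y].

Definition automorphism (phi : T -> T) : Prop :=
  bijective phi /\ forall a b, e (phi a) (phi b) = e a b.

Definition reflection (x y : T) (phi : T -> T) : Prop :=
  [/\ automorphism phi,
      (forall v, phi (phi v) = v),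
      phi x = y,
      (* edges between V_x^y and V_y^x are exactly the pairs {x', phi x'}, x' in V_x^y *)
      (forall a b, [&& a \in Vside x y, b \in Vside y x & e a b]
                   = (a \in Vside x y) && (b == phi a))
    & (forall v, v \in Vmid x y -> phi v = v)].

Definition reflective : Prop :=
  forall x y, e x y -> exists phi : T -> T, reflection x y phi.

(* shortest paths: walks x :: p from u to v with size p = dist u v *)
Definition convex (W : {set T}) : Prop :=
  forall (u : T) (p : seq T),
    path e u p -> size p = dist u (last u p) ->
    u \in W -> last u p \in W -> all (fun w => w \in W) (u :: p).

End Graphs.

Definition induced {T : finType} (e : rel T) (W : {set T}) : rel {v : T | v \in W} :=
  fun a b => e (val a) (val b).
Arguments induced {T} e W _ _.

From mathcomp Require Import all_boot.
Set Implicit Arguments. Unset Strict Implicit. Unset Printing Implicit Defensive.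

(* Let A = V_x^y and let phi be a reflection from x to y.  If u is in A and
   d(z,u) < d(z,phi u), then z is in A: by induction on d(z,u), the next
   vertex z' of a shortest path from z to u lies in A, and if z were not in A
   it would be fixed by phi or equal to phi z', both contradicting the
   inequality.  For an edge u'u inside A, the reflection of that edge maps u'
   to u and phi u' to phi u, so all the sets {z | d(z,u) < d(z,phi u)}, u in A,
   have the size of the one for u = x, which is A itself; hence they all equal
   A.  Convexity follows: a shortest path from u to v in A that passes through
   w outside A would give d(u,v) >= d(u,w) + d(w,phi v) >= d(u,phi v).  The
   same identity shows that the reflection of an edge inside A maps A to
   itself, and since A is convex, distances in the induced graph are those of
   G, so these reflections restrict to reflections of the induced graph. *)

Section Distance.
Variables (T : finType) (e : rel T).

Lemma walknP n u v :
  reflect (exists p, [/\ size p = n, path e u p & last u p = v]) (walkn e n u v).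
Proof.
apply: (iffP existsP).
  by case=> p /andP[pp /eqP lp]; exists (val p); rewrite size_tuple.
by case=> p [<- pp lp]; exists (in_tuple p); rewrite /= pp lp eqxx.
Qed.

Lemma dist_leq_walkn n u v : walkn e n u v -> dist e u v <= n.
Proof.
move=> W; rewrite /dist; case: (ltnP n #|T|) => hn.
  rewrite leqNgt; apply/negP => /(before_find 0).
  by rewrite nth_iota // add0n W.
by apply: leq_trans (find_size _ _) _; rewrite size_iota.
Qed.

Lemma dist_path_leq u p : path e u p -> dist e u (last u p) <= size p.
Proof. by move=> pp; apply: dist_leq_walkn; apply/walknP; exists p. Qed.

(* [dist] only searches lengths below #|T|, which suffices because a walk can
   be shortened to a duplicate-free path. *)
Lemma walkn_dist u p : path e u p -> walkn e (dist e u (last u p)) u (last u p).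
Proof.
move=> pp; case: (shortenP pp) => q pq uq _.
have szq : size q < #|T| by move/card_uniqP: uq => /= <-; apply: max_card.
have has_walk : has (fun n => walkn e n u (last u q)) (iota 0 #|T|).
  apply/hasP; exists (size q); first by rewrite mem_iota add0n szq.
  by apply/walknP; exists q.
have := nth_find 0 has_walk; rewrite nth_iota ?add0n //.
by move: has_walk; rewrite has_find size_iota.
Qed.

Lemma connect_shortest_path u v :
  connect e u v -> exists q, [/\ size q = dist e u v, path e u q & last u q = v].
Proof. by case/connectP => p pp ->; apply/walknP; apply: walkn_dist. Qed.

Lemma Vside_notin x y v : v \in Vside e x y -> v \notin Vside e y x.
Proof. by rewrite !inE => /ltnW; rewrite leqNgt. Qed.

Lemma Vside_trichotomy x y z :
  [\/ z \in Vside e x y, z \in Vmid e x y | z \in Vside e y x].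
Proof. by rewrite !inE; case: ltngtP; [constructor 1 | constructor 3 | constructor 2]. Qed.

Hypothesis conn : connected_graph e.

Lemma shortest_path u v :
  exists q, [/\ size q = dist e u v, path e u q & last u q = v].
Proof. exact: connect_shortest_path. Qed.

Lemma dist_triangle u v w : dist e u w <= dist e u v + dist e v w.
Proof.
have [p [<- pp lp]] := shortest_path u v; have [q [<- pq lq]] := shortest_path v w.
by rewrite -size_cat -lq -lp -last_cat; apply: dist_path_leq; rewrite cat_path pp lp pq.
Qed.

Lemma dist_edge u v : e u v -> dist e u v <= 1.
Proof. by move=> euv; apply: dist_leq_walkn; apply/walknP; exists [:: v]; rewrite /= euv. Qed.

Lemma dist_neighbour u u' v : e u u' -> dist e u v <= (dist e u' v).+1.
Proof. by move=> h; apply: leq_trans (dist_triangle u u' v) _; rewrite -add1n leq_add2r dist_edge. Qed.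

Lemma dist_eq0 u v : dist e u v = 0 -> u = v.
Proof. by have [[|a q] [<- _ <-]] := shortest_path u v. Qed.

Lemma dist_leq1 u v : dist e u v <= 1 -> u = v \/ e u v.
Proof.
have [[|a [|b q]] [<- /= pp <-]] := shortest_path u v => // _; first by left.
by right; case/andP: pp.
Qed.

Lemma dist_succ u v k : dist e u v = k.+1 -> exists2 u', e u u' & dist e u' v = k.
Proof.
have [[|a q] [sq pq lq]] := shortest_path u v; first by rewrite -sq.
move=> duv; case/andP: pq => eua pq; exists a => //.
have k_q : k = size q by apply/succn_inj; rewrite -duv -sq.
apply/eqP; rewrite eqn_leq andbC -ltnS -duv dist_neighbour //= k_q -lq.
exact: dist_path_leq.
Qed.

Lemma dist_automorphism f a b : automorphism e f -> dist e (f a) (f b) = dist e a b.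
Proof.
have dist_hom g : (forall a b, e (g a) (g b) = e a b) ->
    forall a b, dist e (g a) (g b) <= dist e a b.
  move=> hg {}a {}b; have [q [<- pq <-]] := shortest_path a b.
  by rewrite -(size_map g) -last_map; apply: dist_path_leq; rewrite path_map (eq_path hg).
case=> -[g fK gK] hf; apply/eqP; rewrite eqn_leq dist_hom //=.
rewrite -{1}(fK a) -{1}(fK b) dist_hom // => {}a {}b.
by rewrite -hf !gK.
Qed.

End Distance.

Section Reflection.
Variables (T : finType) (e : rel T) (x y : T) (rho : T -> T).
Hypothesis hrho : reflection e x y rho.

Lemma reflectionK : involutive rho.
Proof. by case: hrho. Qed.

Lemma reflection_rel a b : e (rho a) (rho b) = e a b.
Proof. by case: hrho => -[]. Qed.

Lemma reflection_source : rho x = y.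
Proof. by case: hrho. Qed.

Lemma reflection_dist : connected_graph e -> forall a b, dist e (rho a) (rho b) = dist e a b.
Proof. by case: hrho => h _ _ _ _ conn a b; apply: dist_automorphism. Qed.

Lemma reflection_cross v : v \in Vside e x y -> (rho v \in Vside e y x) && e v (rho v).
Proof. by case: hrho => _ _ _ H _ vA; have := H v (rho v); rewrite vA eqxx /= => ->. Qed.

Lemma reflection_cross_edge a b :
  a \in Vside e x y -> b \in Vside e y x -> e a b -> b = rho a.
Proof. by case: hrho => _ _ _ H _ aA bB eab; have := H a b; rewrite aA bB eab => /esym/eqP. Qed.

Lemma reflection_Vmid v : v \in Vmid e x y -> rho v = v.
Proof. by case: hrho => _ _ _ _ H /H. Qed.

End Reflection.

Section Induced.
Variables (T : finType) (e : rel T) (W : {set T}).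
Local Notation eW := (induced e W).

Lemma induced_path (s : {v | v \in W}) q : path eW s q = path e (val s) (map val q).
Proof. by elim: q s => //= t q IH s; rewrite IH. Qed.

Lemma lift_path (s : {v | v \in W}) q : path e (val s) q -> all (mem W) q ->
  exists2 q', path eW s q' & map val q' = q.
Proof.
move=> pq /allP qW; exists (map (insubd s) q); last first.
  by rewrite -map_comp; apply: map_id_in => v /qW vW /=; rewrite insubdK.
by rewrite induced_path -map_comp map_id_in // => v /qW vW /=; rewrite insubdK.
Qed.

Hypotheses (conn : connected_graph e) (hW : convex e W).

Lemma dist_induced s t : dist eW s t = dist e (val s) (val t).
Proof.
have [q [sq pq lq]] := shortest_path conn (val s) (val t).
have /andP[_ qW] : all (mem W) (val s :: q).
  by apply: hW pq _ (valP s) _; rewrite lq ?(valP t).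
have [q' pq' q'q] := lift_path pq qW.
have lq' : last s q' = t by apply: val_inj; rewrite -last_map q'q lq.
apply/eqP; rewrite eqn_leq; apply/andP; split.
  by rewrite -sq -q'q size_map -lq'; apply: dist_path_leq.
have /walknP[r [sr pr lr]] := walkn_dist pq'; rewrite lq' in sr lr.
by rewrite -sr -(size_map val) -lr -last_map dist_path_leq // -induced_path.
Qed.

Lemma Vside_induced a b s : (s \in Vside eW a b) = (val s \in Vside e (val a) (val b)).
Proof. by rewrite !inE !dist_induced. Qed.

Lemma Vmid_induced a b s : (s \in Vmid eW a b) = (val s \in Vmid e (val a) (val b)).
Proof. by rewrite !inE !dist_induced. Qed.

Lemma reflection_induced a b rho : reflection e (val a) (val b) rho ->
  (forall v, v \in W -> rho v \in W) -> exists psi, reflection eW a b psi.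
Proof.
move=> hrho rhoW; have rhoK := reflectionK hrho.
pose psi (s : {v | v \in W}) : {v | v \in W} := exist _ (rho (val s)) (rhoW _ (valP s)).
have psiK : involutive psi by move=> s; apply: val_inj; apply: rhoK.
case: hrho => -[_ hom] _ rab cross mid.
exists psi; split => [| // | | s t | s].
- by split=> [|s t]; [exists psi | apply: hom].
- by apply: val_inj.
- by rewrite !Vside_induced -(inj_eq val_inj) cross.
- by rewrite Vmid_induced => /mid eq_s; apply: val_inj.
Qed.

End Induced.

Section Halfspace.
Variables (T : finType) (e : rel T).
Hypotheses (sym : symmetric e) (irr : irreflexive e).
Hypotheses (conn : connected_graph e) (refl : reflective e).
Variables (x y : T) (phi : T -> T).
Hypothesis hphi : reflection e x y phi.
Local Notation A := (Vside e x y).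

Lemma Vside_reflected_sub u : u \in A -> Vside e u (phi u) \subset A.
Proof.
move=> uA; apply/subsetP => z; rewrite inE.
move Hk: (dist e z u) => k; elim: k z Hk => [|k IH] z Hk hlt.
  by rewrite (dist_eq0 conn Hk).
have [z' ezz' dz'] := dist_succ conn Hk.
have z'A : z' \in A.
  by apply: IH dz' _; rewrite -ltnS; apply: leq_trans hlt (dist_neighbour conn _ ezz').
have [// | zM | zB] := Vside_trichotomy e x y z.
  have dzu : dist e z (phi u) = k.+1.
    by rewrite -{1}(reflection_Vmid hphi zM) (reflection_dist hphi conn).
  by rewrite dzu ltnn in hlt.
have dzu : dist e z (phi u) = k.
  by rewrite (reflection_cross_edge hphi z'A zB) ?(reflection_dist hphi conn) // sym.
by rewrite dzu ltnNge leqnSn in hlt.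
Qed.

Lemma reflection_neighbour_Vside a b : a \in A -> b \in A -> e a b -> phi a \in Vside e a b.
Proof.
move=> aA bA eab; case/andP: (reflection_cross hphi aA) => paB epa.
rewrite inE (@leq_trans 2) ?ltnS ?dist_edge ?(sym (phi a)) //.
rewrite ltnNge; apply/negP => /(dist_leq1 conn) [pab | epb].
  by move: (Vside_notin bA); rewrite -pab paB.
have ab : a = b.
  by rewrite -(reflectionK hphi a) -(reflectionK hphi b) -(reflection_cross_edge hphi bA paB) // sym.
by rewrite ab irr in eab.
Qed.

(* The edge phi a -- phi b joins V_a^b to V_b^a, so it is one of the edges
   that a reflection from a to b must swap. *)
Lemma reflection_swap a b rho : a \in A -> b \in A -> e a b -> reflection e a b rho ->
  rho (phi a) = phi b.
Proof.
move=> aA bA eab hrho; apply/esym/(reflection_cross_edge hrho).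
- exact: reflection_neighbour_Vside.
- by apply: reflection_neighbour_Vside; rewrite // sym.
- by rewrite (reflection_rel hphi).
Qed.

Lemma card_Vside_reflected u : u \in A -> #|Vside e u (phi u)| = #|A|.
Proof.
move Hk: (dist e u x) => k; elim: k u Hk => [|k IH] u Hk uA.
  by rewrite (dist_eq0 conn Hk) (reflection_source hphi).
have [u' euu' du'] := dist_succ conn Hk.
have u'A : u' \in A.
  move: uA; rewrite !inE Hk du' => h; rewrite -ltnS; apply: leq_trans h _.
  exact: dist_neighbour.
have eu'u : e u' u by rewrite sym.
have [rho hrho] := refl eu'u.
have rho_u : u' = rho u by rewrite -(reflection_source hrho) (reflectionK hrho).
have rho_phi_u : phi u' = rho (phi u).
  by rewrite -(reflection_swap u'A uA eu'u hrho) (reflectionK hrho).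
have ->: Vside e u (phi u) = rho @^-1: Vside e u' (phi u').
  by apply/setP => z; rewrite !inE rho_phi_u rho_u !(reflection_dist hrho conn).
by rewrite card_preimset ?IH //; apply: can_inj (reflectionK hrho).
Qed.

Lemma Vside_reflected u : u \in A -> Vside e u (phi u) = A.
Proof.
by move=> uA; apply/eqP; rewrite eqEcard Vside_reflected_sub ?card_Vside_reflected ?leqnn.
Qed.

Lemma convex_Vside : convex e A.
Proof.
move=> u p pp sp uA vA; apply/allP => w hw; apply/negPn/negP => wA.
move: pp sp vA; case/splitPl: hw => p1 p2 lw.
rewrite size_cat cat_path last_cat lw => /andP[pp1 pp2] sp vA.
have duw : dist e u w <= size p1 by rewrite -lw dist_path_leq.
have dwv := dist_path_leq pp2; move: (last w p2) dwv sp vA => v dwv sp vA.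
have dwpv : dist e w (phi v) <= dist e w v.
  by rewrite leqNgt; apply: contra wA => h; rewrite -(Vside_reflected vA) inE.
have := uA; rewrite -(Vside_reflected vA) inE ltnNge => /negP; apply.
apply: leq_trans (dist_triangle conn u w (phi v)) _; rewrite -sp.
by rewrite leq_add // (leq_trans dwpv).
Qed.

Lemma reflection_Vside_stable a b rho : a \in A -> b \in A -> e a b ->
  reflection e a b rho -> forall v, v \in A -> rho v \in A.
Proof.
move=> aA bA eab hrho v vA; rewrite -(Vside_reflected bA) inE.
rewrite -(reflection_swap aA bA eab hrho) -(reflection_source hrho).
by rewrite !(reflection_dist hrho conn); move: vA; rewrite -(Vside_reflected aA) inE.
Qed.

End Halfspace.

Unset Implicit Arguments.

Theorem lemma2p9 (T : finType) (e : rel T) :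
  simple_graph e -> connected_graph e -> reflective e ->
  forall x y : T, e x y ->
    convex e (Vside e x y) /\ reflective (induced e (Vside e x y)).
Proof.
move=> [sym irr] conn refl x y exy; have [phi hphi] := refl x y exy.
have hA := convex_Vside sym irr conn refl hphi.
split=> // a b eab; have [rho hrho] := refl _ _ eab.
have stable := reflection_Vside_stable sym irr conn refl hphi (valP a) (valP b) eab hrho.
exact: (reflection_induced conn hA hrho stable).
Qed.
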